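(* Every set strongly star Lindelöf space of cardinality less than $\mathfrak d$ is set strongly star Menger.
   Context: For a family $\mathcal U$ of subsets of $X$ and $A\subseteq X$, $st(A,\mathcal U)=\bigcup\{U\in\mathcal U: U\cap A\neq\emptyset\}$. $X$ is set strongly star Lindelöf if for every nonempty $A\subseteq X$ and every family $\mathcal U$ of open subsets with $\overline A\subseteq\bigcup\mathcal U$ there is a countable $F\subseteq\overline A$ with $A\subseteq st(F,\mathcal U)$. $X$ is set strongly star Menger if for every nonempty $A\subseteq X$ and every sequence $(\mathcal U_n:n\in\omega)$ of families of open sets with $\overline A\subseteq\bigcup\mathcal U_n$ for all $n$, there are finite $F_n\subseteq\overline A$ with $A\subseteq\bigcup_n st(F_n,\mathcal U_n)$. $\mathfrak d$ is the minimal cardinality of a cofinal subset of $(\omega^\omega,\leq^* )$. *)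

From HB Require Import structures.
From mathcomp Require Import all_boot all_order.
From mathcomp Require Import boolp classical_sets functions cardinality topology.
Set Implicit Arguments. Unset Strict Implicit. Unset Printing Implicit Defensive.
Local Open Scope classical_set_scope.
Local Open Scope card_scope.

Definition star {X : Type} (A : set X) (U : set (set X)) : set X :=
  \bigcup_(u in [set u | U u /\ u `&` A !=set0]) u.

Definition open_family {X : topologicalType} (U : set (set X)) : Prop :=
  forall u, U u -> open u.

Definition set_strongly_star_Lindelof (X : topologicalType) : Prop :=
  forall (A : set X) (U : set (set X)), A !=set0 -> open_family U ->
    closure A `<=` \bigcup_(u in U) u ->
    exists F : set X, [/\ F `<=` closure A, countable F & A `<=` star F U].

Definition set_strongly_star_Menger (X : topologicalType) : Prop :=
  forall (A : set X) (U : nat -> set (set X)), A !=set0 ->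
    (forall n, open_family (U n)) ->
    (forall n, closure A `<=` \bigcup_(u in U n) u) ->
    exists F : nat -> set X,
      [/\ forall n, F n `<=` closure A, forall n, finite_set (F n) &
          A `<=` \bigcup_n star (F n) (U n)].

Definition le_star (f g : nat -> nat) : Prop :=
  exists n0, forall n, (n0 <= n)%N -> (f n <= g n)%N.

Definition cofinal_family (D : set (nat -> nat)) : Prop :=
  forall f, exists2 g, D g & le_star f g.

(* |X| < d, where d = min{ |D| : D cofinal }:
   no cofinal family has cardinality <= |X| *)
Definition card_lt_dfrak (X : Type) : Prop :=
  forall D : set (nat -> nat), cofinal_family D -> ~ (D #<= [set: X]).

From HB Require Import structures.
From mathcomp Require Import all_boot all_order.
From mathcomp Require Import boolp classical_sets functions cardinality topology.
Local Open Scope classical_set_scope.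

(* For each n, set strong star Lindelöfness gives points e_n(0), e_n(1), ... of
   cl A whose stars with respect to U_n cover A.  For a in A let phi_a(n) be an
   index k with a in st(e_n(k), U_n).  Fewer than d functions phi_a cannot
   dominate everything, so some g is not eventually below any phi_a; in
   particular every a has some n with phi_a(n) < g(n), and
   F_n = {e_n(k) : k < g(n)} are the required finite sets. *)

Section Star.
Context {X : Type}.
Implicit Types (F G : set X) (U : set (set X)).

Lemma star_sub {F G U} : F `<=` G -> star F U `<=` star G U.
Proof.
move=> FG x [u [Uu [y [uy Fy]]] ux].
by exists u => //; split => //; exists y; split => //; apply: FG.
Qed.

Lemma star_set0 U : star set0 U = set0.
Proof. by apply/seteqP; split => // x [u [_ [y []]]]. Qed.

Lemma star_bigcup (I : Type) (P : set I) (F : I -> set X) U :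
  star (\bigcup_(i in P) F i) U = \bigcup_(i in P) star (F i) U.
Proof.
apply/seteqP; split => x.
- case=> u [Uu [y [uy [i Pi Fiy]]]] ux.
  by exists i => //; exists u => //; split => //; exists y.
- case=> i Pi [u [Uu [y [uy Fiy]]] ux].
  by exists u => //; split => //; exists y; split => //; exists i.
Qed.

End Star.

Lemma set_strongly_star_Lindelof_enum
    {X : topologicalType} {A : set X} {U : set (set X)} :
  set_strongly_star_Lindelof X -> A !=set0 -> open_family U ->
  closure A `<=` \bigcup_(u in U) u ->
  exists2 e : nat -> X, range e `<=` closure A &
    A `<=` \bigcup_k star [set e k] U.
Proof.
move=> HL A0 Uo Ucov; have [F [FA Fc AF]] := HL A U A0 Uo Ucov.
have [F0|[e]] := pfcard_geP Fc.
  by case: A0 => a /AF; rewrite F0 star_set0.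
have eF : range e = F.
  by apply: surj_image_eq surj => _ [k _ <-]; apply: funS.
exists e; first by rewrite eF.
by rewrite -star_bigcup bigcup_imset1 eF.
Qed.

Lemma not_le_star_lt {f g : nat -> nat} : ~ le_star g f -> exists n, (f n < g n)%N.
Proof.
move=> gf; apply: contra_notP gf => /forallNP fg; exists 0 => n _.
by rewrite leqNgt; apply/negP/fg.
Qed.

Lemma card_lt_dfrak_range_not_cofinal {X : Type} (phi : X -> nat -> nat) :
  card_lt_dfrak X -> ~ cofinal_family (range phi).
Proof. by move=> Hd /Hd; apply; apply: card_le_trans (card_image_le _ _) _. Qed.

Lemma card_lt_dfrak_unbounded {X : Type} (phi : X -> nat -> nat) :
  card_lt_dfrak X -> exists g : nat -> nat, forall x, exists n, (phi x n < g n)%N.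
Proof.
move=> Hd; have /existsNP [g /forall2NP gP] := card_lt_dfrak_range_not_cofinal phi Hd.
exists g => x; apply: not_le_star_lt.
by case: (gP (phi x)) => // -[]; exists x.
Qed.

Theorem proposition2p6 (X : topologicalType) :
  set_strongly_star_Lindelof X -> card_lt_dfrak X -> set_strongly_star_Menger X.
Proof.
move=> HL Hd A U A0 Uo Ucov.
have /choice [e eP] : forall n, exists e : nat -> X,
    range e `<=` closure A /\ A `<=` \bigcup_k star [set e k] (U n).
  move=> n; have [e] := set_strongly_star_Lindelof_enum HL A0 (Uo n) (Ucov n).
  by exists e.
have /choice [phi phiP] : forall a, exists phi_a : nat -> nat,
    forall n, A a -> star [set e n (phi_a n)] (U n) a.
  move=> a; have [Aa|nAa] := pselect (A a); last by exists (fun=> 0) => n /nAa.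
  have /choice [f fP] : forall n, exists k, star [set e n k] (U n) a.
    by move=> n; have [k _] := (eP n).2 a Aa; exists k.
  by exists f.
have [g gP] := card_lt_dfrak_unbounded phi Hd.
exists (fun n => e n @` `I_(g n)); split.
- by move=> n _ [k _ <-]; apply: (eP n).1; exists k.
- by move=> n; apply: finite_image.
- move=> a Aa; have [n lt_phi_g] := gP a; exists n => //.
  by apply: star_sub (phiP a n Aa) => _ ->; exists (phi a n).
Qed.
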